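(* Let $m<n$ be integers with $m\ge -1$ even, and let $p\in\Gamma_n$. Suppose $p\hat a=bqa$ for paths $\hat a,a,b$ and $q\in\Gamma_m$ (so that $q$ occurs in the path $p\hat a$, in which $p$ occurs as a suffix). Then $b\notin I$ if and only if the occurrence of $q$ lies inside $\sigma_{m+1}(p)$. In particular, in that case $q$ lies inside $p$. Dually, if $\hat b p=bqa$ with $q\in\Gamma_m$, then $a\notin I$ if and only if the occurrence of $q$ lies inside $\pi_{m+1}(p)$.
   Context: Let $\Bbbk$ be a field, $Q=(Q_0,Q_1,s,t)$ a finite quiver, and $A=\Bbbk Q/I$ a finite-dimensional monomial algebra, i.e. $I$ is an ideal generated by paths of length at least $2$. Paths are written from right to left: a path is $p=\alpha_n\cdots\alpha_1$ with arrows $\alpha_i$ and $t(\alpha_i)=s(\alpha_{i+1})$; vertices are the paths of length $0$ (trivial paths, also denoted $1$); $qp$ denotes concatenation when $t(p)=s(q)$. Let $\mathcal B$ be the set of paths not lying in $I$. If $p=bqa$ for paths $a,b,q$, then $q$ is a divisor of $p$; we write $q\le p$ to mean that $q$ is a divisor of $p$ at a fixed position (an occurrence). If $b$ is trivial, $q$ is a suffix; if $a$ is trivial, $q$ is a prefix; proper means $q\neq p$. For $n\ge -1$, a left $n$-ambiguity is a path $p$ with a decomposition $p=u_{-1}u_0u_1\cdots u_n$ such that $u_{-1}\in Q_0$, $u_0\in Q_1$, $u_i\in\mathcal B$ for all $i$, and for every $0\le i\le n-1$, $u_iu_{i+1}\in I$ while no proper suffix of $u_iu_{i+1}$ lies in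 $I$ (one writes $p=u_0\cdots u_n$). A right $n$-ambiguity is a path with a decomposition $p=v_n\cdots v_0v_{-1}$ with $v_{-1}\in Q_0$, $v_0\in Q_1$, $v_i\in\mathcal B$, and for $0\le i\le n-1$, $v_{i+1}v_i\in I$ while no proper prefix of $v_{i+1}v_i$ lies in $I$. A path is a left $n$-ambiguity iff it is a right $n$-ambiguity; such paths are called $n$-ambiguities, and $\Gamma_n$ denotes their set. Both decompositions of an $n$-ambiguity are unique. For $p\in\Gamma_n$ with left decomposition $u_0\cdots u_n$ and right decomposition $v_n\cdots v_0$, and $-1\le m\le n$, set $\sigma_m(p):=u_0\cdots u_m$ (a suffix of $p$ which is an $m$-ambiguity) and $\pi_m(p):=v_m\cdots v_0$ (a prefix of $p$ which is an $m$-ambiguity). *)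

From mathcomp Require Import all_boot.
Set Implicit Arguments.
Unset Strict Implicit.
Unset Printing Implicit Defensive.

(* Paths are written from right
   to left: the path alpha_n ... alpha_1 (alpha_1 traversed first) is stored
   with arrs = [:: alpha_n; ...; alpha_1] (written order), together with its
   source and target vertices (needed for trivial paths). *)

Record qpath (V A : Type) := QPath { src : V; tgt : V; arrs : seq A }.

Section Paths.
Variables (V A : finType) (s t : A -> V).

Notation qp := (qpath V A).

Definition valid (p : qp) : bool :=
  match arrs p with
  | [::] => src p == tgt p
  | a :: l => [&& t a == tgt p,
                  path (fun x y => s x == t y) a l
                & s (last a l) == src p]
  end.

Definition len (p : qp) : nat := size (arrs p).

Definition composable (q p : qp) : bool := src q == tgt p.

Definition pcat (q p : qp) : qp := QPath (src p) (tgt q) (arrs q ++ arrs p).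

Definition divisor (q p : qp) : Prop :=
  exists b a, [/\ valid b, valid a, composable b q, composable q a & p = pcat b (pcat q a)].

Definition proper_suffix (q w : qp) : Prop :=
  (exists a, [/\ valid a, composable q a & w = pcat q a]) /\ q <> w.

Definition proper_prefix (q w : qp) : Prop :=
  (exists b, [/\ valid b, composable b q & w = pcat b q]) /\ q <> w.

(* the monomial ideal generated by the set of paths [rels] *)
Variable rels : qp -> Prop.

Definition inI (p : qp) : Prop := exists r, rels r /\ divisor r p.

Definition inB (p : qp) : Prop := valid p /\ ~ inI p.

Definition trivialp (p : qp) : Prop := valid p /\ arrs p = [::].
Definition arrowp (p : qp) : Prop := valid p /\ len p = 1.

Fixpoint prodp (d : qp) (l : seq qp) : qp :=
  match l with
  | [::] => d
  | x :: l' => match l' with [::] => x | _ => pcat x (prodp d l') end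
  end.

Definition left_step (x y : qp) : Prop :=
  [/\ composable x y, inI (pcat x y) &
      forall q, proper_suffix q (pcat x y) -> ~ inI q].

Definition right_step (x y : qp) : Prop :=
  [/\ composable x y, inI (pcat x y) &
      forall q, proper_prefix q (pcat x y) -> ~ inI q].

(* left n-ambiguity decomposition p = u_{-1} u_0 u_1 ... u_n,
   with u_{-1} = u1 and us = [:: u_0; ...; u_n] *)
Definition left_dec (n : nat) (p u1 : qp) (us : seq qp) : Prop :=
  size us = n.+1 /\
  trivialp u1 /\
  arrowp (nth u1 us 0) /\
  (forall i, i < n.+1 -> inB (nth u1 us i)) /\
  composable u1 (nth u1 us 0) /\
  (forall i, i < n -> left_step (nth u1 us i) (nth u1 us i.+1)) /\
  p = prodp u1 (u1 :: us).

(* right n-ambiguity decomposition p = v_n ... v_1 v_0 v_{-1},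
   with v_{-1} = v1 and vs = [:: v_0; ...; v_n] *)
Definition right_dec (n : nat) (p v1 : qp) (vs : seq qp) : Prop :=
  size vs = n.+1 /\
  trivialp v1 /\
  arrowp (nth v1 vs 0) /\
  (forall i, i < n.+1 -> inB (nth v1 vs i)) /\
  composable (nth v1 vs 0) v1 /\
  (forall i, i < n -> right_step (nth v1 vs i.+1) (nth v1 vs i)) /\
  p = prodp v1 (rcons (rev vs) v1).

(* Gamma_n: paths that are (left and, equivalently, right) n-ambiguities *)
Definition Gamma (n : nat) (p : qp) : Prop :=
  (exists u1 us, left_dec n p u1 us) /\ (exists v1 vs, right_dec n p v1 vs).

(* sigma_m(p) = u_0 ... u_m and pi_m(p) = v_m ... v_0 computed from the
   (unique) decompositions *)
Definition sigma_amb (m : nat) (u1 : qp) (us : seq qp) : qp :=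
  prodp u1 (take m.+1 us).
Definition pi_amb (m : nat) (v1 : qp) (vs : seq qp) : qp :=
  prodp v1 (rev (take m.+1 vs)).

End Paths.

From mathcomp Require Import all_boot zify.
Set Implicit Arguments.
Unset Strict Implicit.
Unset Printing Implicit Defensive.

(* Read paths as words of arrows.  The boundaries e 0 < e 1 < ... between the
   factors of an n-ambiguity form a chain: a relation ends exactly at every
   second boundary e (i+2), and none starting at or after e i ends before it.
   Two such chains interleave: e i <= g j forces e (i+2) <= g (j+2).  For q
   sitting after b, the first boundaries of q are g 0 = len b, g 1 = len b + 1.
   If no relation ends inside b then g 1 <= e 2, and interleaving, m being even,
   carries this to g (m+1) <= e (m+2): q ends inside sigma_(m+1)(p).  A relation
   inside b instead gives e 2 <= g 0, hence e (m+2) <= g m < g (m+1).  The dual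
   statement is the same argument on reversed words. *)

Section Interleaving.
Variable R : nat -> nat -> Prop.

(* [R i j]: a relation occupies the positions [i, j) of a word. *)
Definition rel_chain (e : nat -> nat) (n : nat) :=
  forall i, i < n ->
    (exists2 i', e i <= i' & R i' (e i.+2)) /\
    (forall i' j, e i <= i' -> j < e i.+2 -> ~ R i' j).

Section TwoChains.
Variables (e g : nat -> nat) (n m : nat).
Hypotheses (He : rel_chain e n) (Hg : rel_chain g m).

Lemma rel_chain_le_step i j : i < n -> j < m -> e i <= g j -> e i.+2 <= g j.+2.
Proof.
move=> hi hj le_ij; have [[i' le_ji' Ri'] _] := Hg hj.
rewrite leqNgt; apply/negP => lt_ge_e.
exact: (proj2 (He hi) i' (g j.+2) (leq_trans le_ij le_ji') lt_ge_e Ri').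
Qed.

Lemma rel_chain_le_iter i j k : e i <= g j ->
  i + k.*2 <= n.+1 -> j + k.*2 <= m.+1 -> e (i + k.*2) <= g (j + k.*2).
Proof.
move=> le_ij; elim: k => [|k IHk] hi hj; first by rewrite !addn0.
rewrite doubleS !addnS; apply: rel_chain_le_step; rewrite ?IHk //; lia.
Qed.

End TwoChains.

Lemma rel_chain_interleave e g n m x :
  rel_chain e n -> rel_chain g m -> e 0 = 0 -> g 0 = x -> g 1 = x.+1 ->
  g m < g m.+1 -> ~~ odd m -> m < n ->
  (forall i j, j <= x -> ~ R i j) <-> g m.+1 <= e m.+2.
Proof.
move=> He Hg e0 g0 g1 gm_lt even_m lt_mn.
have m_half : m = (m./2).*2 by rewrite -[LHS]odd_double_half (negbTE even_m).
have [[i' _ R_e2] no_R_e2] := He 0 (leq_ltn_trans (leq0n m) lt_mn).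
split=> [no_rel | le_end].
- have lt_x_e2 : x < e 2.
    by rewrite ltnNge; apply/negP => le_e2; exact: no_rel i' (e 2) le_e2 R_e2.
  have := rel_chain_le_iter (k := m./2) Hg He (i := 1) (j := 2).
  by rewrite -m_half g1; apply.
- move=> i j le_jx Rij.
  have lt_x_e2 : x < e 2.
    rewrite ltnNge; apply/negP => le_e2.
    have := rel_chain_le_iter (k := m./2) He Hg (i := 2) (j := 0).
    rewrite -m_half g0 add0n add2n => /(_ le_e2); lia.
  by apply: no_R_e2 Rij; rewrite ?e0 //; lia.
Qed.

End Interleaving.

Section Words.
Variables (T : Type) (Rel : seq T -> Prop).

Definition occurs (w : seq T) (i j : nat) :=
  [/\ i <= j, j <= size w & Rel (take (j - i) (drop i w))].

Definition contains (w : seq T) := exists i j, occurs w i j.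

Definition contains_min (w : seq T) :=
  contains w /\ forall k, k < size w -> ~ contains (take k w).

Lemma occurs_catl u v i j : j <= size u -> occurs (u ++ v) i j <-> occurs u i j.
Proof.
move=> le_ju; rewrite /occurs size_cat.
suff eq_factor : i <= j -> take (j - i) (drop i (u ++ v)) = take (j - i) (drop i u).
  by split=> -[le_ij le_j]; rewrite eq_factor //; split=> //; lia.
move=> le_ij; case: (ltnP i (size u)) => [lt_iu | le_ui].
  by rewrite drop_cat lt_iu takel_cat // size_drop; lia.
have -> : j - i = 0 by lia.
by rewrite !take0.
Qed.

Lemma occurs_catr u v i j : occurs (u ++ v) (size u + i) (size u + j) <-> occurs v i j.
Proof.
rewrite /occurs size_cat subnDl drop_cat ltnNge leq_addr /= addKn.
by rewrite leq_add2l leq_add2l.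
Qed.

Lemma occurs_take w k i j :
  k <= size w -> occurs (take k w) i j <-> occurs w i j /\ j <= k.
Proof.
move=> le_kw; have size_take_k : size (take k w) = k by rewrite size_takel.
case: (leqP j k) => [le_jk | lt_kj].
  by rewrite -{2}(cat_take_drop k w) occurs_catl ?size_take_k //; split=> // -[].
by split=> [[_]|[]]; rewrite ?size_take_k; lia.
Qed.

Lemma contains_take w k : k <= size w ->
  contains (take k w) <-> exists i j, occurs w i j /\ j <= k.
Proof.
move=> le_kw; split=> -[i [j occ_ij]]; exists i, j.
  exact/(occurs_take _ _ le_kw).
exact/(occurs_take _ _ le_kw).
Qed.

Lemma contains_min_occurs pre w post : contains_min w ->
  (exists2 i, size pre <= i & occurs (pre ++ w ++ post) i (size pre + size w)) /\
  (forall i j, size pre <= i -> j < size pre + size w ->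
     ~ occurs (pre ++ w ++ post) i j).
Proof.
move=> [[i [j occ_ij]] no_prefix]; have [_ le_jw _] := occ_ij.
have shift i' j' : occurs (pre ++ w ++ post) (size pre + i') (size pre + j') <->
    occurs (w ++ post) i' j' by exact: occurs_catr.
have j_eq : j = size w.
  apply/eqP; rewrite eqn_leq le_jw leqNgt.
  apply/negP => lt_jw; apply: (no_prefix j lt_jw).
  by apply/contains_take; [lia | exists i, j].
split=> [|i' j' le_i' lt_j' occ'].
  exists (size pre + i); first exact: leq_addr.
  by rewrite -j_eq; apply/shift/(occurs_catl post i le_jw).
have le_ij' : i' <= j' by case: occ'.
move: occ'; rewrite -(subnKC le_i') -(subnKC (leq_trans le_i' le_ij')).
move=> /shift /(occurs_catl post) occ_w.
apply: (no_prefix (j' - size pre)); first lia.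
apply/contains_take; first lia.
by exists (i' - size pre), (j' - size pre); split=> //; apply: occ_w; lia.
Qed.

Definition min_chain (L : seq (seq T)) (n : nat) :=
  forall i, i < n -> contains_min (nth [::] L i ++ nth [::] L i.+1).

Definition amb_blocks (L : seq (seq T)) (n : nat) :=
  [/\ size L = n.+1, size (nth [::] L 0) = 1, min_chain L n
    & forall i, i <= n -> ~ contains (nth [::] L i)].

Lemma min_chain_rel_chain pre post L n : n < size L -> min_chain L n ->
  rel_chain (occurs (pre ++ flatten L ++ post))
            (fun k => size pre + size (flatten (take k L))) n.
Proof.
move=> lt_nL chainL i lt_in.
set x := nth [::] L i; set y := nth [::] L i.+1.
have drop_i : drop i L = x :: y :: drop i.+2 L.
  by rewrite (drop_nth [::]) ?(drop_nth [::] (_ : i.+1 < size L)) //; lia.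
have eqW : pre ++ flatten L ++ post =
    (pre ++ flatten (take i L)) ++ (x ++ y) ++ (flatten (drop i.+2 L) ++ post).
  by rewrite -{1}(cat_take_drop i L) drop_i flatten_cat /= !catA.
have size_take2 : size (flatten (take i.+2 L)) = size (flatten (take i L)) + size (x ++ y).
  by rewrite -addn2 takeD drop_i flatten_cat size_cat /= take0 cats0.
have := contains_min_occurs (pre ++ flatten (take i L)) (flatten (drop i.+2 L) ++ post)
  (chainL i lt_in).
by rewrite -eqW size_cat -addnA -size_take2.
Qed.

Lemma amb_blocks_last L n : amb_blocks L n -> 0 < size (nth [::] L n).
Proof.
case: n => [[_ -> //]|n [_ _ chainL notin]].
rewrite lt0n; apply/negP => /eqP/size0nil last_nil.
have [contains_cat _] := chainL n (ltnSn n).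
by apply: (notin n (leqnSn n)); move: contains_cat; rewrite last_nil cats0.
Qed.

Lemma amb_blocks_occurrence L K pre post post' n m :
  n < size L -> min_chain L n -> amb_blocks K m -> ~~ odd m -> m < n ->
  flatten L ++ post = pre ++ flatten K ++ post' ->
  ~ contains pre <-> size pre + size (flatten K) <= size (flatten (take m.+2 L)).
Proof.
move=> lt_nL chainL blocksK even_m lt_mn eqW.
have [size_K size_K0 chainK _] := blocksK.
set W := pre ++ flatten K ++ post'.
have lt_mK : m < size K by rewrite size_K.
have chain_e := min_chain_rel_chain [::] post lt_nL chainL.
rewrite cat0s eqW in chain_e.
have chain_g := min_chain_rel_chain pre post' lt_mK chainK.
have no_occ : ~ contains pre <-> forall i j, j <= size pre -> ~ occurs W i j.
  have le_pre : size pre <= size W by rewrite size_cat leq_addr.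
  rewrite -{1}(@take_size_cat _ (size pre) pre (flatten K ++ post')) //.
  split=> [no_pre i j le_j occ | no_occ /(contains_take le_pre) [i [j [occ le_j]]]].
    by apply: no_pre; apply/contains_take => //; exists i, j.
  exact: no_occ le_j occ.
apply: (iff_trans no_occ).
rewrite -(take_oversize (_ : size K <= m.+1)) ?size_K //.
apply: (rel_chain_interleave chain_e chain_g); rewrite ?take0 ?addn0 //.
  by case: (K) size_K0 => // K0 K' /= size_K0; rewrite take0 cats0 size_K0 addn1.
rewrite (take_nth [::] lt_mK) flatten_rcons size_cat.
by have := amb_blocks_last blocksK; lia.
Qed.

End Words.

Definition rev_rel (T : Type) (Rel : seq T -> Prop) (w : seq T) := Rel (rev w).

Lemma occurs_rev (T : Type) (Rel : seq T -> Prop) w i j : occurs Rel w i j ->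
  occurs (rev_rel Rel) (rev w) (size w - j) (size w - i).
Proof.
move=> [le_ij le_jw]; rewrite take_drop subnK // => occ.
split; rewrite ?size_rev; try lia.
rewrite /rev_rel drop_rev take_rev size_takel; last lia.
have -> : size w - (size w - j) = j by lia.
have -> : j - (size w - i - (size w - j)) = i by lia.
by rewrite revK.
Qed.

Lemma contains_rev (T : Type) (Rel : seq T -> Prop) w :
  contains (rev_rel Rel) (rev w) <-> contains Rel w.
Proof.
split=> [[i [j /occurs_rev]] | [i [j /occurs_rev occ]]].
  rewrite revK size_rev => -[le_ji le_iw occ]; exists (size w - j), (size w - i).
  by split=> //; move: occ; rewrite /rev_rel revK.
by exists (size w - j), (size w - i).
Qed.

Lemma amb_blocks_map (S T : Type) (Rel : seq T -> Prop) (f : S -> seq T) (d : S) xs n :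
  size xs = n.+1 -> size (f (nth d xs 0)) = 1 ->
  (forall i, i < n -> contains_min Rel (f (nth d xs i) ++ f (nth d xs i.+1))) ->
  (forall i, i <= n -> ~ contains Rel (f (nth d xs i))) ->
  amb_blocks Rel (map f xs) n.
Proof.
move=> size_xs size_x0 chain notin.
have nth_f i : i <= n -> nth [::] (map f xs) i = f (nth d xs i).
  by move=> le_in; rewrite (nth_map d) // size_xs.
split; rewrite ?size_map ?nth_f //.
  by move=> i lt_in; rewrite !nth_f //; [apply: chain | apply: ltnW].
by move=> i le_in; rewrite nth_f //; apply: notin.
Qed.

Section Quiver.
Variables (V A : finType) (s t : A -> V).
Notation qp := (qpath V A).
Notation valid := (valid s t).

Lemma valid_split (p : qp) l1 l2 : valid p -> arrs p = l1 ++ l2 ->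
  exists q a, [/\ valid q, valid a, composable q a, p = pcat q a
                & arrs q = l1 /\ arrs a = l2].
Proof.
case: p => x y ap valid_p /= eq_ap; subst ap.
case: l1 valid_p => [|c l1] valid_p.
  by exists (QPath y y [::]), (QPath x y l2); rewrite /valid /composable /= eqxx.
case: l2 valid_p => [|d l2] valid_p.
  exists (QPath x y (c :: l1)), (QPath x x [::]).
  by move: valid_p; rewrite /valid /composable /pcat /= cats0 eqxx.
move: valid_p; rewrite /valid /= cat_path last_cat /=.
move=> /and3P [tc /andP [path_c /andP [sd path_d]] sl].
exists (QPath (s (last c l1)) y (c :: l1)), (QPath x (s (last c l1)) (d :: l2)).
split=> //.
- by rewrite /valid /= tc path_c eqxx.
- by rewrite /valid /= eq_sym sd path_d sl.
- by rewrite /composable.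
Qed.

Lemma valid_pcat (p q : qp) : valid p -> valid q -> composable p q -> valid (pcat p q).
Proof.
case: p => sp tp [|a ap]; case: q => sq tq [|b aq]; rewrite /valid /composable /pcat /=.
- by move=> /eqP <- /eqP <- /eqP ->.
- by move=> /eqP <- + /eqP ->.
- by rewrite cats0 => + /eqP <- /eqP <-.
- move=> /and3P [ta path_a /eqP sa] /and3P [tb path_b sb] /eqP ts.
  by rewrite ta cat_path path_a last_cat /= sa ts eq_sym tb path_b sb.
Qed.

Lemma valid_arrs_inj (p q : qp) :
  valid p -> valid q -> arrs p = arrs q -> arrs p != [::] -> p = q.
Proof.
case: p => x y ap; case: q => x' y' aq /= valid_p valid_q eq_arrs; subst aq.
case: ap valid_p valid_q => [|a l] //; rewrite /valid /= => + + _.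
by move=> /and3P [/eqP <- _ /eqP <-] /and3P [/eqP <- _ /eqP <-].
Qed.

Variable rels : qp -> Prop.

Definition relword (w : seq A) := exists r, rels r /\ arrs r = w.

Lemma inI_contains (p : qp) : inI s t rels p -> contains relword (arrs p).
Proof.
case=> r [rel_r [b [a [_ _ _ _ ->]]]].
exists (size (arrs b)), (size (arrs b) + size (arrs r)).
rewrite /occurs /pcat /= !size_cat addnA !leq_addr addKn drop_size_cat // take_size_cat //.
by split=> //; exists r.
Qed.

Hypothesis Hrels : forall r, rels r -> valid r /\ 2 <= len r.

Lemma contains_inI (p : qp) : valid p -> contains relword (arrs p) -> inI s t rels p.
Proof.
move=> valid_p [i [j [le_ij le_jp [r [rel_r arrs_r]]]]].
have [valid_r len_r] := Hrels rel_r.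
have split_p : arrs p = take i (arrs p) ++ (arrs r ++ drop j (arrs p)).
  rewrite arrs_r -{1}(cat_take_drop i (arrs p)); congr (_ ++ _).
  by rewrite -{1}(cat_take_drop (j - i) (drop i (arrs p))) drop_drop subnK.
have [b [ra [valid_b valid_ra comp_b eq_p [_ arrs_ra]]]] := valid_split valid_p split_p.
have [r' [a [valid_r' valid_a comp_a eq_ra [arrs_r' _]]]] := valid_split valid_ra arrs_ra.
have eq_r : r' = r.
  by apply: valid_arrs_inj; rewrite ?arrs_r' // -size_eq0 -/(len r) -lt0n; lia.
subst r' ra; exists r; split=> //; exists b, a; split=> //.
Qed.

Lemma inI_containsE (p : qp) : valid p -> inI s t rels p <-> contains relword (arrs p).
Proof. by move=> valid_p; split; [apply: inI_contains | apply: contains_inI]. Qed.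

(* Arrow lists are in written order, so the suffixes of a path are the
   prefixes of its arrow list, and its prefixes correspond to prefixes of the
   reversed list. *)
Lemma left_step_contains_min (x y : qp) : valid x -> valid y ->
  left_step s t rels x y -> contains_min relword (arrs x ++ arrs y).
Proof.
move=> valid_x valid_y [comp_xy in_xy no_suffix].
split=> [|k lt_k]; first exact: inI_contains in_xy.
have valid_xy := valid_pcat valid_x valid_y comp_xy.
have [q [a [valid_q valid_a comp_qa eq_xy [arrs_q _]]]] :=
  valid_split valid_xy (esym (cat_take_drop k (arrs x ++ arrs y))).
rewrite -arrs_q => /(contains_inI valid_q).
apply: no_suffix; split; first by exists a.
move=> /(congr1 (fun r => size (arrs r))).
by rewrite arrs_q /pcat /= size_take lt_k; lia.
Qed.

Lemma right_step_contains_min (x y : qp) : valid x -> valid y ->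
  right_step s t rels x y -> contains_min (rev_rel relword) (rev (arrs x ++ arrs y)).
Proof.
move=> valid_x valid_y [comp_xy in_xy no_prefix].
split=> [|k]; first by apply/contains_rev; exact: inI_contains in_xy.
rewrite size_rev => lt_k.
have valid_xy := valid_pcat valid_x valid_y comp_xy.
have [b [q [valid_b valid_q comp_bq eq_xy [_ arrs_q]]]] := valid_split valid_xy
  (esym (cat_take_drop (size (arrs x ++ arrs y) - k) (arrs x ++ arrs y))).
rewrite take_rev -arrs_q => /contains_rev /(contains_inI valid_q).
apply: no_prefix; split; first by exists b.
move=> /(congr1 (fun r => size (arrs r))).
by rewrite arrs_q /pcat /= size_drop; lia.
Qed.

Lemma arrs_prodp (d : qp) l :
  0 < size l -> arrs (prodp d l) = flatten (map (@arrs V A) l).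
Proof.
elim: l => [|x l IHl] // _; case: l IHl => [|y l] IHl /=; first by rewrite cats0.
by rewrite IHl.
Qed.

Lemma left_dec_blocks n (p u1 : qp) us : left_dec s t rels n p u1 us ->
  arrs p = flatten (map (@arrs V A) us) /\
  amb_blocks relword (map (@arrs V A) us) n.
Proof.
move=> [size_us [[_ arrs_u1] [[_ len_u0] [inB_us [_ [steps ->]]]]]].
split; first by rewrite arrs_prodp //= arrs_u1.
apply: (amb_blocks_map (d := u1)) => // [i lt_in | i /inB_us [valid_i not_in]].
  have [[valid_i _] [valid_i1 _]] := (inB_us i (leqW lt_in), inB_us i.+1 lt_in).
  exact: left_step_contains_min (steps i lt_in).
by move/(contains_inI valid_i).
Qed.

Lemma right_dec_blocks n (p v1 : qp) vs : right_dec s t rels n p v1 vs ->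
  rev (arrs p) = flatten (map (fun v => rev (arrs v)) vs) /\
  amb_blocks (rev_rel relword) (map (fun v => rev (arrs v)) vs) n.
Proof.
move=> [size_vs [[_ arrs_v1] [[_ len_v0] [inB_vs [_ [steps ->]]]]]].
split.
  rewrite arrs_prodp ?size_rcons // map_rcons flatten_rcons arrs_v1 cats0.
  by rewrite rev_flatten -map_comp map_rev revK.
apply: (amb_blocks_map (d := v1)) => // [|i lt_in | i /inB_vs [valid_i not_in]].
- by rewrite size_rev.
- have [[valid_i _] [valid_i1 _]] := (inB_vs i (leqW lt_in), inB_vs i.+1 lt_in).
  rewrite -rev_cat; exact: right_step_contains_min (steps i lt_in).
- by move/contains_rev/(contains_inI valid_i).
Qed.

Lemma len_sigma_amb k (u1 : qp) us : 0 < size us ->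
  len (sigma_amb k u1 us) = size (flatten (take k.+1 (map (@arrs V A) us))).
Proof.
by move=> us_gt0; rewrite /len /sigma_amb arrs_prodp -?map_take // size_take; case: ifP.
Qed.

Lemma len_sigma_amb_le n k (p u1 : qp) us :
  left_dec s t rels n p u1 us -> len (sigma_amb k u1 us) <= len p.
Proof.
move=> [size_us [[_ arrs_u1] [_ [_ [_ [_ ->]]]]]].
rewrite len_sigma_amb ?size_us // /len arrs_prodp //= arrs_u1 /=.
by rewrite -{2}(cat_take_drop k.+1 (map _ us)) flatten_cat size_cat leq_addr.
Qed.

Lemma len_pi_amb k (v1 : qp) vs : 0 < size vs ->
  len (pi_amb k v1 vs) = size (flatten (take k.+1 (map (fun v => rev (arrs v)) vs))).
Proof.
move=> vs_gt0; rewrite /len /pi_amb arrs_prodp; last by rewrite size_rev size_take; case: ifP.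
by rewrite -size_rev rev_flatten -!map_comp map_rev revK map_take.
Qed.

Lemma sigma_amb_occurrence n m (p u1 q w1 ah b a : qp) us ws :
  ~~ odd m -> m < n -> left_dec s t rels n p u1 us -> left_dec s t rels m q w1 ws ->
  valid b -> pcat p ah = pcat b (pcat q a) ->
  ~ inI s t rels b <-> len b + len q <= len (sigma_amb m.+1 u1 us).
Proof.
move=> even_m lt_mn dec_p dec_q valid_b eq_paths.
have [arrs_p [size_us _ chain_p _]] := left_dec_blocks dec_p.
have [arrs_q blocks_q] := left_dec_blocks dec_q.
have eq_words : flatten (map (@arrs V A) us) ++ arrs ah =
    arrs b ++ flatten (map (@arrs V A) ws) ++ arrs a.
  by rewrite -arrs_p -arrs_q; exact: (congr1 (@arrs V A) eq_paths).
rewrite len_sigma_amb -?(size_map (@arrs V A)) ?size_us // /len arrs_q.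
apply: iff_trans (amb_blocks_occurrence _ chain_p blocks_q even_m lt_mn eq_words).
  by split=> not_in /(inI_containsE valid_b).
by rewrite size_us.
Qed.

Lemma pi_amb_occurrence n m (p v1 q w1 bh b a : qp) vs ws :
  ~~ odd m -> m < n -> right_dec s t rels n p v1 vs -> right_dec s t rels m q w1 ws ->
  valid a -> pcat bh p = pcat b (pcat q a) ->
  ~ inI s t rels a <-> len q + len a <= len (pi_amb m.+1 v1 vs).
Proof.
move=> even_m lt_mn dec_p dec_q valid_a eq_paths.
have [arrs_p [size_vs _ chain_p _]] := right_dec_blocks dec_p.
have [arrs_q blocks_q] := right_dec_blocks dec_q.
have eq_words : flatten (map (fun v => rev (arrs v)) vs) ++ rev (arrs bh) =
    rev (arrs a) ++ flatten (map (fun v => rev (arrs v)) ws) ++ rev (arrs b).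
  rewrite -arrs_p -arrs_q -!rev_cat -catA.
  by congr rev; exact: (congr1 (@arrs V A) eq_paths).
rewrite len_pi_amb -?(size_map (fun v => rev (arrs v))) ?size_vs // /len.
rewrite -size_rev arrs_q addnC -(size_rev (arrs a)).
apply: iff_trans (amb_blocks_occurrence _ chain_p blocks_q even_m lt_mn eq_words).
  split=> not_in in_a; apply: not_in.
    by apply/(inI_containsE valid_a)/contains_rev.
  by apply/contains_rev/(inI_containsE valid_a).
by rewrite size_vs.
Qed.

End Quiver.

Theorem mainTheorem8
  (V A : finType) (s t : A -> V) (rels : qpath V A -> Prop)
  (* I is generated by paths of length at least 2 *)
  (Hrels : forall r, rels r -> valid s t r /\ 2 <= len r)
  (* A = kQ/I is finite-dimensional: all long enough paths lie in I *)
  (Hfin : exists N, forall p, valid s t p -> N <= len p -> inI s t rels p)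
  (m n : nat) (Hm : ~~ odd m) (Hmn : m < n)
  (p : qpath V A) (Hp : Gamma s t rels n p) :
  (forall ah a b q,
     valid s t ah -> valid s t a -> valid s t b ->
     Gamma s t rels m q ->
     composable p ah -> composable b q -> composable q a ->
     pcat p ah = pcat b (pcat q a) ->
     forall u1 us, left_dec s t rels n p u1 us ->
       (~ inI s t rels b <-> len b + len q <= len (sigma_amb m.+1 u1 us))
       /\ (~ inI s t rels b -> len b + len q <= len p))
  /\
  (forall bh a b q,
     valid s t bh -> valid s t a -> valid s t b ->
     Gamma s t rels m q ->
     composable bh p -> composable b q -> composable q a ->
     pcat bh p = pcat b (pcat q a) ->
     forall v1 vs, right_dec s t rels n p v1 vs ->
       (~ inI s t rels a <-> len q + len a <= len (pi_amb m.+1 v1 vs))).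
Proof.
split=> [ah a b q _ _ valid_b [[w1 [ws dec_q]] _] _ _ _ eq_paths u1 us dec_p |
         bh a b q _ valid_a _ [_ [w1 [ws dec_q]]] _ _ _ eq_paths v1 vs dec_p].
  have crit := sigma_amb_occurrence Hrels Hm Hmn dec_p dec_q valid_b eq_paths.
  by split=> // /crit le_q; exact: leq_trans le_q (len_sigma_amb_le _ dec_p).
exact: (pi_amb_occurrence Hrels Hm Hmn dec_p dec_q valid_a eq_paths).
Qed.
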